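(* Let $E$ be a finite-dimensional real vector space with two symplectic forms $\omega_0$ and $\omega_1$. The following are equivalent: (1) every form $(1-t)\omega_0+t\omega_1$, $t\in[0,1]$, is symplectic; (2) every form $\omega_0+\tau\omega_1$, $\tau\ge0$, is symplectic; (3) there is a complex structure $J$ on $E$ tamed by both $\omega_0$ and $\omega_1$.
   Context: A complex structure $J$ on $E$ is tamed by a symplectic form $\omega$ if $\omega(v,Jv)>0$ for every nonzero $v\in E$. *)

From HB Require Import structures.
From mathcomp Require Import all_boot all_order all_algebra.
From mathcomp Require Import reals.
Set Implicit Arguments. Unset Strict Implicit. Unset Printing Implicit Defensive.
Import Order.TTheory GRing.Theory Num.Theory.
Local Open Scope ring_scope.

(* The finite-dimensional real vector space E is modelled as R^n = 'rV[R]_n,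
   with R : realType.  A bilinear form on E is given by its Gram matrix W:
   omega(u,v) = u W v^T.  Linear maps act on row vectors on the right. *)

Definition bform (R : realType) (n : nat) (W : 'M[R]_n) (u v : 'rV[R]_n) : R :=
  (u *m W *m v^T) 0 0.

Definition symplectic (R : realType) (n : nat) (W : 'M[R]_n) : Prop :=
  (forall v : 'rV[R]_n, bform W v v = 0) /\
  (forall u : 'rV[R]_n, (forall v : 'rV[R]_n, bform W u v = 0) -> u = 0).

Definition complex_structure (R : realType) (n : nat) (J : 'M[R]_n) : Prop :=
  J *m J = - 1%:M.

Definition tamed (R : realType) (n : nat) (W J : 'M[R]_n) : Prop :=
  forall v : 'rV[R]_n, v != 0 -> 0 < bform W v (v *m J).

From HB Require Import structures.
From mathcomp Require Import all_boot all_order all_algebra.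
From mathcomp Require Import reals complex.
From mathcomp Require Import ring lra zify.
Import Order.TTheory GRing.Theory Num.Theory.
Local Open Scope ring_scope.
Set Implicit Arguments. Unset Strict Implicit. Unset Printing Implicit Defensive.

(* (1) and (2) describe the same pencil of forms up to the positive rescaling
   t = tau / (1 + tau), and a complex structure tamed by w0 and w1 is tamed by
   every convex combination of them, which is therefore nondegenerate.
   For (2) -> (3) we induct on dim E.  Condition (2) forbids negative real
   eigenvalues of w1 w0^-1, so any eigenvalue yields a w0-isotropic invariant
   subspace L of dimension 1 or 2 on which w1 = N w0 with N positive.  Writing
   E = L + U + L', with L' w0-dual to L and U the w0-orthogonal of L + L', both
   forms and condition (2) descend to U; the induction hypothesis gives J' on U,
   and (p, y, s) |-> (-s, y J', p) in a basis L + U + c L' tames both forms once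
   c > 0 is small enough to dominate the cross terms of w1. *)

Section BilinearForm.
Variable R : realType.

Definition bf k l (M : 'M[R]_(k, l)) (p : 'rV_k) (q : 'rV_l) : R := (p *m M *m q^T) 0 0.
Definition sqnorm k (p : 'rV[R]_k) : R := (p *m p^T) 0 0.

Lemma bformE n (W : 'M[R]_n) u v : bform W u v = bf W u v. Proof. by []. Qed.

Section Linearity.
Variables k l : nat.
Implicit Types (M : 'M[R]_(k, l)) (p : 'rV[R]_k) (q : 'rV[R]_l).

Lemma bfDl M p1 p2 q : bf M (p1 + p2) q = bf M p1 q + bf M p2 q.
Proof. by rewrite /bf !mulmxDl mxE. Qed.
Lemma bfDr M p q1 q2 : bf M p (q1 + q2) = bf M p q1 + bf M p q2.
Proof. by rewrite /bf linearD /= mulmxDr mxE. Qed.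
Lemma bfZl M a p q : bf M (a *: p) q = a * bf M p q.
Proof. by rewrite /bf -!scalemxAl mxE. Qed.
Lemma bfZr M a p q : bf M p (a *: q) = a * bf M p q.
Proof. by rewrite /bf linearZ /= -scalemxAr mxE. Qed.
Lemma bfNl M p q : bf M (- p) q = - bf M p q.
Proof. by rewrite -scaleN1r bfZl mulN1r. Qed.
Lemma bfNr M p q : bf M p (- q) = - bf M p q.
Proof. by rewrite -scaleN1r bfZr mulN1r. Qed.
Lemma bf0l M q : bf M 0 q = 0.
Proof. by rewrite /bf !mul0mx mxE. Qed.
Lemma bf0r M p : bf M p 0 = 0.
Proof. by rewrite /bf trmx0 mulmx0 mxE. Qed.
Lemma bfMD M M' p q : bf (M + M') p q = bf M p q + bf M' p q.
Proof. by rewrite /bf mulmxDr mulmxDl mxE. Qed.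
Lemma bfMZ M a p q : bf (a *: M) p q = a * bf M p q.
Proof. by rewrite /bf -scalemxAr -scalemxAl mxE. Qed.
Lemma bfMN M p q : bf (- M) p q = - bf M p q.
Proof. by rewrite -scaleN1r bfMZ mulN1r. Qed.
Lemma bf0M p q : bf (0 : 'M[R]_(k, l)) p q = 0.
Proof. by rewrite /bf mulmx0 mul0mx mxE. Qed.

Lemma bf_tr M p q : bf M p q = bf M^T q p.
Proof.
rewrite /bf; have -> : q *m M^T *m p^T = (p *m M *m q^T)^T.
  by rewrite !trmx_mul trmxK mulmxA.
by rewrite [RHS]mxE.
Qed.

Lemma bf_delta M i j : bf M (delta_mx 0 i) (delta_mx 0 j) = M i j.
Proof. by rewrite /bf -rowE trmx_delta -colE !mxE. Qed.

End Linearity.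

Lemma bf_mulmx k l k' l' (M : 'M[R]_(k, l)) (X : 'M_(k', k)) (Y : 'M_(l', l)) p q :
  bf M (p *m X) (q *m Y) = bf (X *m M *m Y^T) p q.
Proof. by rewrite /bf trmx_mul !mulmxA. Qed.

Lemma bf_mull k l k' (M : 'M[R]_(k, l)) (X : 'M_(k', k)) p q :
  bf M (p *m X) q = bf (X *m M) p q.
Proof. by rewrite /bf mulmxA. Qed.

Lemma bf1C k (p q : 'rV[R]_k) : bf 1%:M p q = bf 1%:M q p.
Proof. by rewrite bf_tr trmx1. Qed.

Lemma bf1 k (p : 'rV[R]_k) : bf 1%:M p p = sqnorm p.
Proof. by rewrite /bf mulmx1. Qed.

Lemma sqnormE k (p : 'rV[R]_k) : sqnorm p = \sum_i p 0 i ^+ 2.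
Proof. by rewrite /sqnorm mxE; apply: eq_bigr => i _; rewrite mxE expr2. Qed.

Lemma sqnorm_ge0 k (p : 'rV[R]_k) : 0 <= sqnorm p.
Proof. by rewrite sqnormE sumr_ge0 // => i _; rewrite sqr_ge0. Qed.

Lemma sqnorm_eq0 k (p : 'rV[R]_k) : (sqnorm p == 0) = (p == 0).
Proof.
apply/idP/idP; last by move/eqP->; rewrite /sqnorm mul0mx mxE.
rewrite sqnormE psumr_eq0 => [/allP H|i _]; last by rewrite sqr_ge0.
apply/eqP/rowP => i; rewrite mxE; apply/eqP; rewrite -sqrf_eq0.
exact: (implyP (H i (mem_index_enum i))).
Qed.

Lemma sqnorm_gt0 k (p : 'rV[R]_k) : p != 0 -> 0 < sqnorm p.
Proof. by move=> hp; rewrite lt_def sqnorm_eq0 hp sqnorm_ge0. Qed.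

Lemma mx11_eq0 (M : 'M[R]_1) : M 0 0 = 0 -> M = 0.
Proof. by move=> h; apply/matrixP => i j; rewrite !ord1 h mxE. Qed.

Lemma mulmx_ext p q (A B : 'M[R]_(p, q)) : (forall w : 'rV_p, w *m A = w *m B) -> A = B.
Proof. by move=> h; apply/row_matrixP => i; rewrite !rowE h. Qed.

Lemma row_free_inv r n (A : 'M[R]_(r, n)) : r = n -> row_free A ->
  exists2 B : 'M[R]_(n, r), B *m A = 1%:M & A *m B = 1%:M.
Proof.
move=> e hf; have /row_fullP[B hB] : row_full A.
  by move: hf; rewrite /row_full /row_free => /eqP->; rewrite e.
case/row_freeP: hf => C hC; exists B => //.
by rewrite -[B]mulmx1 -hC mulmxA hB mul1mx.
Qed.

Section Alternating.
Variables (n : nat) (W : 'M[R]_n).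
Hypothesis alt : forall v, bform W v v = 0.

Lemma alt_bfC u v : bf W u v = - bf W v u.
Proof.
have := alt (u + v); rewrite bformE bfDl !bfDr.
have := alt u; have := alt v; rewrite !bformE => -> ->.
by rewrite add0r addr0 => /eqP; rewrite addr_eq0 => /eqP.
Qed.

Lemma alt_trmx : W^T = - W.
Proof. by apply/matrixP => i j; rewrite !mxE -!bf_delta alt_bfC. Qed.

End Alternating.

Lemma skew_gramC n k l (W : 'M[R]_n) (X : 'M_(k, n)) (Y : 'M_(l, n)) :
  W^T = - W -> X *m W *m Y^T = - (Y *m W *m X^T)^T.
Proof. by move=> h; rewrite !trmx_mul trmxK h mulNmx mulmxN opprK mulmxA. Qed.

Lemma symplectic_mulmx_eq0 n (W : 'M[R]_n) (u : 'rV_n) : symplectic W -> u *m W = 0 -> u = 0.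
Proof. by case=> _ h hu; apply: h => v; rewrite bformE /bf hu mul0mx mxE. Qed.

Lemma symplectic_unitmx n (W : 'M[R]_n) : symplectic W -> W \in unitmx.
Proof.
by move=> hW; rewrite -row_free_unit; apply: inj_row_free => w; apply: symplectic_mulmx_eq0.
Qed.

Lemma bform_tamed n (W J : 'M[R]_n) y : bform W y (y *m J) = bf (W *m J^T) y y.
Proof. by rewrite bformE /bf trmx_mul !mulmxA. Qed.

End BilinearForm.

Section PositiveForms.
Variable R : realType.

Definition posdef m (S : 'M[R]_m) := forall y : 'rV_m, y != 0 -> 0 < bf S y y.

Lemma posdef_ge0 m (S : 'M[R]_m) y : posdef S -> 0 <= bf S y y.
Proof. by move=> h; have [->|/h/ltW//] := eqVneq y 0; rewrite bf0l. Qed.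

Lemma posdef1 m : posdef (1%:M : 'M[R]_m).
Proof. by move=> y /sqnorm_gt0; rewrite bf1. Qed.

Lemma posdef_unitmx m (S : 'M[R]_m) : posdef S -> S \in unitmx.
Proof.
move=> h; rewrite -row_free_unit; apply: inj_row_free => w hw.
by apply/eqP/negPn/negP => /h; rewrite /bf hw mul0mx mxE ltxx.
Qed.

Lemma tamed_posdef n (W J : 'M[R]_n) : tamed W J -> posdef (W *m J^T).
Proof. by move=> h y /h; rewrite bform_tamed. Qed.

Lemma tamed_ge0 n (W J : 'M[R]_n) y : tamed W J -> 0 <= bform W y (y *m J).
Proof. by move=> /tamed_posdef /posdef_ge0; rewrite bform_tamed. Qed.

Lemma bf1_ge_amgm k (u v : 'rV[R]_k) e : 0 < e ->
  - (sqnorm u / e) - e / 4 * sqnorm v <= bf 1%:M u v.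
Proof.
move=> e0; have en0 : e != 0 by rewrite gt_eqF.
have := sqnorm_ge0 (u + (e / 2) *: v).
rewrite -bf1 bfDl !bfDr !bfZl !bfZr (bf1C v u) !bf1 => h.
rewrite -subr_ge0.
have -> : bf 1%:M u v - (- (sqnorm u / e) - e / 4 * sqnorm v) =
   (sqnorm u + e / 2 * bf 1%:M u v + (e / 2 * bf 1%:M u v + e / 2 * (e / 2 * sqnorm v))) / e.
  by field; rewrite en0.
by rewrite divr_ge0 // ltW.
Qed.

Lemma posdef_cauchy_schwarz m (S : 'M[R]_m) (x y : 'rV_m) : S^T = S -> posdef S ->
  bf S y x ^+ 2 <= bf S y y * bf S x x.
Proof.
move=> hs hp; have [->|xn0] := eqVneq x 0; first by rewrite !bf0r expr0n mulr0.
have ha := hp _ xn0; set a := bf S x x in ha *.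
have := posdef_ge0 (a *: y - bf S y x *: x) hp.
rewrite bfDl !bfDr !bfNl !bfNr !bfZl !bfZr (bf_tr S x y) hs -/a => h.
have h2 : 0 <= a * (a * bf S y y - bf S y x ^+ 2) by move: h; congr (_ <= _); ring.
by rewrite -subr_ge0 mulrC; move: h2; rewrite pmulr_rge0.
Qed.

(* Cauchy-Schwarz for the symmetrisation S + S^T, applied to each column of G. *)
Lemma posdef_dominates m k (S : 'M[R]_m) (G : 'M[R]_(m, k)) : posdef S ->
  exists2 M, 0 <= M & forall y, sqnorm (y *m G) <= M * bf S y y.
Proof.
move=> hS; set S' := S + S^T.
have hS' : posdef S' by move=> y /hS hy; rewrite bfMD -bf_tr ltr_wpDl // ltW.
have sS' : S'^T = S' by rewrite /S' linearD /= trmxK addrC.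
have uS' := posdef_unitmx hS'.
pose x (j : 'I_k) := (invmx S' *m col j G)^T.
exists (2 * \sum_j bf S' (x j) (x j)).
  by rewrite mulr_ge0 // sumr_ge0 // => j _; apply: posdef_ge0.
move=> y; rewrite sqnormE.
have hx j : bf S' y (x j) = (y *m G) 0 j.
  rewrite /bf /x trmxK mulmxA -(mulmxA _ S') mulmxV // mulmx1.
  by rewrite colE mulmxA -colE mxE.
have hyy : bf S' y y = 2 * bf S y y by rewrite bfMD -bf_tr mulr2n mulrDl !mul1r.
rewrite mulrAC -hyy mulr_sumr.
by apply: ler_sum => j _; rewrite -hx; apply: posdef_cauchy_schwarz.
Qed.

Lemma bf_ge_posdef m k (S : 'M[R]_m) (G : 'M[R]_(m, k)) : posdef S ->
  exists2 M, 0 <= M & forall e y p, 0 < e ->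
    - (M / e * bf S y y) - e / 4 * sqnorm p <= bf G y p.
Proof.
move=> /(posdef_dominates G)[M M0 hM]; exists M => // e y p e0.
rewrite -[G]mulmx1 -bf_mull.
apply: le_trans (bf1_ge_amgm _ _ e0); rewrite lerD2r lerN2 mulrAC.
by rewrite ler_pM2r ?invr_gt0//; exact: hM.
Qed.

Lemma coupling_const (a M1 M2 M3 : R) : 0 < a -> 0 <= M1 -> 0 <= M2 -> 0 <= M3 ->
  exists2 c, 0 < c &
    [/\ c * (M1 / a) + c * (M2 / a) <= 1 / 2, c * (M3 / 2) <= a / 4 & c <= a / 2].
Proof.
move=> a0 M10 M20 M30; set E := M1 + M2 + M3 + 1.
have E0 : 0 < E by rewrite /E ltr_wpDl // !addr_ge0.
have an0 : a != 0 by rewrite gt_eqF.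
have En0 : E != 0 by rewrite gt_eqF.
exists (a / (2 * E)); first by rewrite divr_gt0 // mulr_gt0.
split.
- have -> : a / (2 * E) * (M1 / a) + a / (2 * E) * (M2 / a) = (M1 + M2) / (2 * E).
    by field; rewrite ?an0 ?En0.
  by rewrite ler_pdivrMr ?mulr_gt0 // /E; lra.
- have -> : a / (2 * E) * (M3 / 2) = a / 4 * (M3 / E) by field; rewrite ?an0 ?En0.
  apply: ler_piMr; first by rewrite divr_ge0 // ltW.
  by rewrite ler_pdivrMr // mul1r /E; lra.
- have -> : a / (2 * E) = a / 2 * E^-1 by field; rewrite ?an0 ?En0.
  apply: ler_piMr; first by rewrite divr_ge0 // ltW.
  by rewrite invf_le1 // /E; lra.
Qed.

(* Each cross term is bounded by AM-GM, with weights chosen so that half of the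
   diagonal terms absorb them. *)
Lemma posdef_small_perturbation m k (S : 'M[R]_m) (G1 G2 : 'M[R]_(m, k))
    (H : 'M[R]_k) (a : R) :
  0 < a -> posdef S ->
  exists2 c, 0 < c & forall y p s, [|| p != 0, y != 0 | s != 0] ->
    0 < bf S y y + c * (a * sqnorm p + a * sqnorm s + bf G1 y p + bf G2 y s
                        + c * bf H s p).
Proof.
move=> a0 hS.
have [M1 M10 hb1] := bf_ge_posdef G1 hS.
have [M2 M20 hb2] := bf_ge_posdef G2 hS.
have [M3 M30 hb3] := bf_ge_posdef H^T (@posdef1 k).
have [c c0 [cq cp cs]] := coupling_const a0 M10 M20 M30.
exists c => // y p s hne.
set q := bf S y y; set np := sqnorm p; set ns := sqnorm s.
have q0 : 0 <= q by apply: posdef_ge0.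
have np0 : 0 <= np := sqnorm_ge0 p.
have ns0 : 0 <= ns := sqnorm_ge0 s.
have F1 : - (c * (M1 / a) * q) - a / 4 * (c * np) <= c * bf G1 y p.
  rewrite (_ : - _ - _ = c * (- (M1 / a * q) - a / 4 * np)); last by ring.
  by rewrite ler_pM2l //; exact: hb1.
have F2 : - (c * (M2 / a) * q) - a / 4 * (c * ns) <= c * bf G2 y s.
  rewrite (_ : - _ - _ = c * (- (M2 / a * q) - a / 4 * ns)); last by ring.
  by rewrite ler_pM2l //; exact: hb2.
have F3 : - (c * (M3 / 2) * (c * np)) - c / 2 * (c * ns) <= c * (c * bf H s p).
  rewrite bf_tr (_ : - _ - _ = c * (c * (- (M3 / 2 * bf 1%:M p p) - 2 / 4 * ns))).
    by rewrite !ler_pM2l //; exact: hb3.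
  by rewrite bf1 /np; field.
have Gq : (c * (M1 / a) + c * (M2 / a)) * q <= 1 / 2 * q := ler_wpM2r q0 cq.
have Ep : 0 <= c * np by rewrite mulr_ge0 // ltW.
have Es : 0 <= c * ns by rewrite mulr_ge0 // ltW.
have Ap : 0 <= a * (c * np) by rewrite mulr_ge0 // ltW.
have As : 0 <= a * (c * ns) by rewrite mulr_ge0 // ltW.
have Gp : c * (M3 / 2) * (c * np) <= a / 4 * (c * np) := ler_wpM2r Ep cp.
have cs2 : c / 2 <= a / 4 by lra.
have Gs : c / 2 * (c * ns) <= a / 4 * (c * ns) := ler_wpM2r Es cs2.
have -> : q + c * (a * np + a * ns + bf G1 y p + bf G2 y s + c * bf H s p) =
  q + a * (c * np) + a * (c * ns) + c * bf G1 y p + c * bf G2 y s + c * (c * bf H s p).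
  by ring.
case/or3P: hne => [pn0 | /hS yn0 | sn0].
- have := mulr_gt0 a0 (mulr_gt0 c0 (sqnorm_gt0 pn0)); rewrite -/np; lra.
- move: yn0; rewrite -/q; lra.
- have := mulr_gt0 a0 (mulr_gt0 c0 (sqnorm_gt0 sn0)); rewrite -/ns; lra.
Qed.

End PositiveForms.

Section SplitBasis.
Variable R : realType.
Variables (n k m : nat) (P Q : 'M[R]_(k, n)) (U : 'M[R]_(m, n)).

Local Notation B := (col_mx P (col_mx U Q)).

Lemma mul_split_basis (w : 'rV[R]_(k + (m + k))) :
  w *m B = lsubmx w *m P + (lsubmx (rsubmx w) *m U + rsubmx (rsubmx w) *m Q).
Proof.
by rewrite -{1}(hsubmxK w) mul_row_col -{1}(hsubmxK (rsubmx w)) mul_row_col.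
Qed.

Lemma bf_split_basis (W : 'M[R]_n) (p s p' s' : 'rV[R]_k) (y y' : 'rV[R]_m) :
  bf W (p *m P + (y *m U + s *m Q)) (p' *m P + (y' *m U + s' *m Q)) =
  bf (P *m W *m P^T) p p' + bf (P *m W *m U^T) p y' + bf (P *m W *m Q^T) p s' +
  bf (U *m W *m P^T) y p' + bf (U *m W *m U^T) y y' + bf (U *m W *m Q^T) y s' +
  bf (Q *m W *m P^T) s p' + bf (Q *m W *m U^T) s y' + bf (Q *m W *m Q^T) s s'.
Proof. by rewrite !bfDl !bfDr !bf_mulmx; ring. Qed.

Lemma bform_split_cplx (W : 'M[R]_n) (J' : 'M[R]_m) (p s : 'rV[R]_k) (y : 'rV[R]_m) :
  W^T = - W -> P *m W *m P^T = 0 -> P *m W *m U^T = 0 ->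
  bform W (p *m P + (y *m U + s *m Q)) ((- s) *m P + (y *m J' *m U + p *m Q)) =
  bf (P *m W *m Q^T) p p + bf (P *m W *m Q^T) s s + bform (U *m W *m U^T) y (y *m J')
  + bf (U *m W *m Q^T) y p - bf (U *m W *m Q^T) (y *m J') s + bf (Q *m W *m Q^T) s p.
Proof.
move=> skW WPP WPU; rewrite !bformE bf_split_basis.
rewrite (skew_gramC U P skW) (skew_gramC Q P skW) (skew_gramC Q U skW) WPP WPU.
rewrite trmx0 oppr0 !bf0M !bfMN -!bf_tr ?bfNl ?bfNr; ring.
Qed.

Lemma split_coord_neq0 (p s : 'rV[R]_k) (y : 'rV[R]_m) :
  p *m P + (y *m U + s *m Q) != 0 -> [|| p != 0, y != 0 | s != 0].
Proof.
apply: contraNT; rewrite !negb_or !negbK => /and3P[/eqP-> /eqP-> /eqP->].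
by rewrite !mul0mx !addr0.
Qed.

Definition cplx_block (J' : 'M[R]_m) : 'M[R]_(k + (m + k)) :=
  block_mx 0 (row_mx 0 1%:M) (col_mx 0 (- 1%:M)) (block_mx J' 0 0 0).

Lemma mul_cplx_block J' (p s : 'rV[R]_k) (y : 'rV[R]_m) :
  row_mx p (row_mx y s) *m cplx_block J' = row_mx (- s) (row_mx (y *m J') p).
Proof.
rewrite /cplx_block mul_row_block mulmx0 add0r mul_row_col mulmx0 add0r mulmxN mulmx1.
rewrite mul_mx_row mulmx0 mulmx1 mul_row_block !mulmx0 !addr0.
by rewrite add_row_mx add0r addr0.
Qed.

Lemma cplx_block_complex J' : complex_structure J' -> complex_structure (cplx_block J').
Proof.
move=> hJ; apply: mulmx_ext => w; rewrite mulmxA -(hsubmxK w) -(hsubmxK (rsubmx w)).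
rewrite !mul_cplx_block mulmxN mulmx1 -mulmxA hJ mulmxN mulmx1.
by rewrite !opp_row_mx.
Qed.

Hypotheses (freeB : row_free B) (dimB : (k + (m + k))%N = n).

Lemma split_basis_complex_structure J' : complex_structure J' ->
  exists2 J : 'M[R]_n, complex_structure J &
    forall v : 'rV_n, exists (p : 'rV_k) (y : 'rV_m) (s : 'rV_k),
      v = p *m P + (y *m U + s *m Q) /\ v *m J = (- s) *m P + (y *m J' *m U + p *m Q).
Proof.
move=> hJ'; have [Bi BiB BBi] := row_free_inv dimB freeB.
exists (Bi *m cplx_block J' *m B).
  rewrite /complex_structure -!mulmxA (mulmxA B) BBi mul1mx (mulmxA (cplx_block J')).
  by rewrite cplx_block_complex // mulNmx mul1mx mulmxN BiB.
move=> v; set w := v *m Bi.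
have hw : w = row_mx (lsubmx w) (row_mx (lsubmx (rsubmx w)) (rsubmx (rsubmx w))).
  by rewrite !hsubmxK.
exists (lsubmx w), (lsubmx (rsubmx w)), (rsubmx (rsubmx w)); split.
  by rewrite -mul_split_basis /w -mulmxA BiB mulmx1.
rewrite !mulmxA -/w [X in X *m cplx_block _]hw mul_cplx_block mul_split_basis.
by rewrite !row_mxKl !row_mxKr !row_mxKl.
Qed.

End SplitBasis.

Section SymplecticBasis.
Variable R : realType.

Lemma isotropic_dual n k (W : 'M[R]_n) (P : 'M[R]_(k, n)) :
  symplectic W -> row_free P -> P *m W *m P^T = 0 ->
  exists P' : 'M[R]_(k, n), P *m W *m P'^T = 1%:M /\ P' *m W *m P'^T = 0.
Proof.
move=> hW hP WPP; have skW := alt_trmx hW.1.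
have /row_freeP[B PWB] : row_free (P *m W).
  by rewrite /row_free mxrankMfree ?row_free_unit ?symplectic_unitmx.
set X := B^T; set G := X *m W *m X^T.
have PWX : P *m W *m X^T = 1%:M by rewrite /X trmxK.
have XWP : X *m W *m P^T = - 1%:M by rewrite (skew_gramC X P skW) PWX trmx1.
(* Correcting X by half its Gram matrix makes it isotropic without changing its pairing with P. *)
exists (X - (2^-1 *: G) *m P); split.
  by rewrite linearD /= linearN /= trmx_mul mulmxDr mulmxN mulmxA WPP mul0mx subr0.
set D := 2^-1 *: G.
have DPWX : D *m P *m W *m X^T = D by rewrite -!mulmxA (mulmxA P) PWX mulmx1.
have DPWP : D *m P *m W *m P^T = 0 by rewrite -!mulmxA (mulmxA P) WPP !mulmx0.
have sG : G^T = - G by rewrite [in RHS]/G (skew_gramC X X skW) opprK.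
rewrite linearB /= trmx_mul !mulmxBr !mulmxBl !mulmxA DPWX DPWP XWP mul0mx mulNmx mul1mx.
rewrite -/G /D [(2^-1 *: G)^T]linearZ /= sG subr0 scalerN !opprK -addrA -opprD -scalerDl.
have -> : 2^-1 + 2^-1 = 1 :> R by field.
by rewrite scale1r subrr.
Qed.

Section Complement.
Variables (n k : nat) (W : 'M[R]_n) (P P' : 'M[R]_(k, n)).
Hypotheses (hW : symplectic W) (WPP : P *m W *m P^T = 0) (WPP' : P *m W *m P'^T = 1%:M)
  (WP'P' : P' *m W *m P'^T = 0).
Let skW : W^T = - W := alt_trmx hW.1.

Lemma dual_pair_coord_eq0 (a b : 'rV[R]_k) (x : 'rV[R]_n) :
  x *m W *m P^T = 0 -> x *m W *m P'^T = 0 -> a *m P + (x + b *m P') = 0 ->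
  [/\ a = 0, x = 0 & b = 0].
Proof.
move=> xWP xWP' h.
have WP'P : P' *m W *m P^T = - 1%:M by rewrite (skew_gramC P' P skW) WPP' trmx1.
have pair V : (a *m P + (x + b *m P')) *m W *m V =
    a *m (P *m W *m V) + (x *m W *m V + b *m (P' *m W *m V)).
  by rewrite !mulmxDl !mulmxA.
have a0 : a = 0.
  by have := pair _ P'^T; rewrite h WPP' WP'P' xWP' mulmx1 !mulmx0 !addr0 !mul0mx.
have b0 : b = 0.
  have := pair _ P^T; rewrite h WPP WP'P xWP mulmxN mulmx1 mulmx0 !add0r !mul0mx.
  by move/eqP; rewrite eq_sym oppr_eq0 => /eqP.
by move: h; rewrite a0 b0 !mul0mx add0r addr0.
Qed.

Lemma symplectic_complement : exists m (U : 'M[R]_(m, n)),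
  [/\ (k + (m + k))%N = n, P *m W *m U^T = 0, U *m W *m P'^T = 0
    & row_free (col_mx P (col_mx U P'))].
Proof.
set T := col_mx P P'.
have freeT : row_free T.
  apply: inj_row_free => w; rewrite -(hsubmxK w) mul_row_col -[_ *m P']add0r => h.
  have zW r (V : 'M_(n, r)) : (0 : 'rV[R]_n) *m W *m V = 0 by rewrite !mul0mx.
  by have [-> _ ->] := dual_pair_coord_eq0 (zW _ _) (zW _ _) h; rewrite row_mx0.
set U := row_base (kermx (W *m T^T)).
have /eq_row_mx[UWP UWP'] : row_mx (U *m W *m P^T) (U *m W *m P'^T) = row_mx 0 0.
  have UWT : U *m (W *m T^T) = 0 by apply/sub_kermxP; rewrite eq_row_base.
  have gramT r (Z : 'M_(r, n)) :
      Z *m (W *m T^T) = row_mx (Z *m W *m P^T) (Z *m W *m P'^T).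
    by rewrite tr_col_mx !mul_mx_row !mulmxA.
  by rewrite -gramT UWT row_mx0.
have freeU : row_free U := row_base_free _.
clearbody U.
exists (\rank (kermx (W *m T^T))), U; split.
- rewrite mxrank_ker -mxrank_tr trmx_mul trmxK mxrankMfree; last first.
    by rewrite row_free_unit unitmx_tr symplectic_unitmx.
  have rT : \rank T = (k + k)%N by apply/eqP.
  by rewrite rT; have := rank_leq_col T; rewrite (eqP freeT); lia.
- by rewrite (skew_gramC P U skW) UWP trmx0 oppr0.
- by [].
apply: inj_row_free => w; rewrite -(hsubmxK w) -(hsubmxK (rsubmx w)) !mul_row_col.
have [xWP xWP'] : lsubmx (rsubmx w) *m U *m W *m P^T = 0 /\
                  lsubmx (rsubmx w) *m U *m W *m P'^T = 0.
  by rewrite -!mulmxA !(mulmxA U W) UWP UWP' !mulmx0.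
case/(dual_pair_coord_eq0 xWP xWP') => -> /eqP yU0 ->.
by move: yU0; rewrite mulmx_free_eq0 // => /eqP ->; rewrite !row_mx0.
Qed.

End Complement.

Section Reduction.
Variables (n k m : nat) (W : 'M[R]_n) (P P' : 'M[R]_(k, n)) (U : 'M[R]_(m, n)).
Hypotheses (freeB : row_free (col_mx P (col_mx U P'))) (dimB : (k + (m + k))%N = n).

Lemma symplectic_reduction (M : 'M[R]_k) :
  symplectic W -> P *m W *m P^T = 0 -> P *m W *m U^T = 0 -> P *m W *m P'^T = M ->
  M \in unitmx -> symplectic (U *m W *m U^T).
Proof.
move=> hW WPP WPU WPP' uM; have skW := alt_trmx hW.1.
split=> [y|y hy]; first by rewrite bformE -bf_mulmx -bformE hW.1.
have [Bi BiB _] := row_free_inv dimB freeB.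
(* Adding a P-component to yU cancels its pairing with P', leaving a vector in the kernel of W. *)
set a := - (y *m (U *m W *m P'^T *m invmx M)).
have x0 : a *m P + (y *m U + 0 *m P') = 0.
  apply: hW.2 => v; rewrite -[v]mulmx1 -BiB mulmxA mul_split_basis bformE bf_split_basis.
  rewrite WPP WPU WPP' (skew_gramC U P skW) WPU trmx0 oppr0.
  have := hy (lsubmx (rsubmx (v *m Bi))); rewrite bformE => ->.
  by rewrite !bf0M !bf0l bfNl bf_mull mulmxKV // !add0r !addr0 addNr.
have : row_mx a (row_mx y 0) *m col_mx P (col_mx U P') = 0 by rewrite !mul_row_col.
move/eqP; rewrite mulmx_free_eq0 // => /eqP ay0.
have : row_mx a (row_mx y 0) = row_mx 0 (row_mx 0 (0 : 'rV_k)) by rewrite !row_mx0.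
by case/eq_row_mx => _ /eq_row_mx[].
Qed.
End Reduction.
End SymplecticBasis.

Section TwoByTwo.
Variable R : realType.
Local Notation c0 p := (p 0 (lshift 1 ord0)).
Local Notation c1 p := (p 0 (rshift 1 ord0)).

Lemma mul_scalar_block (p : 'rV[R]_(1 + 1)) (a b c d : R) :
  p *m block_mx a%:M b%:M c%:M d%:M =
  row_mx (c0 p * a + c1 p * c)%:M (c0 p * b + c1 p * d)%:M.
Proof.
rewrite -{1}(hsubmxK p) mul_row_block !mul_mx_scalar.
by congr row_mx; apply/matrixP => i j; rewrite !ord1 !mxE /= !mulr1n; ring.
Qed.

Lemma bf_scalar_block (p q : 'rV[R]_(1 + 1)) (a b c d : R) :
  bf (block_mx a%:M b%:M c%:M d%:M) p q =
  (c0 p * a + c1 p * c) * c0 q + (c0 p * b + c1 p * d) * c1 q.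
Proof.
rewrite /bf mul_scalar_block -{1}(hsubmxK q) tr_row_mx mul_row_col mxE.
by rewrite !mul_scalar_mx !mxE.
Qed.

Lemma sqnorm2 (p : 'rV[R]_(1 + 1)) : sqnorm p = c0 p ^+ 2 + c1 p ^+ 2.
Proof. by rewrite sqnormE big_split_ord !big_ord1. Qed.

End TwoByTwo.

Section InvariantBlock.
Variable R : realType.

(* The rows of P span a W0-isotropic subspace mapped to itself by W1 W0^-1, which acts
   there as N; positivity of N is measured against a K whose symmetric part is 1. *)
Definition tame_block n (W0 W1 : 'M[R]_n) :=
  exists k (P : 'M[R]_(k, n)) (N K : 'M[R]_k) (b : R),
  [/\ (0 < k)%N, row_free P, P *m W0 *m P^T = 0, P *m W1 = N *m P *m W0 &
   [/\ 0 < b, forall p, bf K p p = sqnorm p & forall p, bf (N *m K^T) p p = b * sqnorm p]].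

Variables (n : nat) (W0 W1 : 'M[R]_n).
Hypotheses (h0 : symplectic W0) (h1 : symplectic W1).

(* Nondegeneracy of W0 + tau W1 with tau = - 1/lam rules out a negative eigenvalue. *)
Lemma tame_block_real (u : 'rV[R]_n) (lam : R) :
  (forall tau, 0 <= tau -> symplectic (W0 + tau *: W1)) ->
  u != 0 -> u *m W1 = lam *: (u *m W0) -> tame_block W0 W1.
Proof.
move=> h2 un0 hu.
have lam0 : 0 < lam.
  have [lt|//|eq] := ltgtP lam 0.
    have ht : 0 <= - lam^-1 by rewrite oppr_ge0 invr_le0 ltW.
    move: un0; rewrite (symplectic_mulmx_eq0 (h2 _ ht) (u := u)) ?eqxx //.
    rewrite mulmxDr -scalemxAr hu scalerA mulNr mulVf ?ltr0_neq0 //.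
    by apply/matrixP => i j; rewrite !mxE; ring.
  by move: un0; rewrite (symplectic_mulmx_eq0 h1 (u := u)) ?eqxx // hu eq scale0r.
exists 1%N, u, lam%:M, 1%:M, lam; split => //.
- apply: inj_row_free => w; rewrite [w]mx11_scalar mul_scalar_mx => /eqP.
  rewrite scaler_eq0 (negbTE un0) orbF => /eqP->.
  by apply/matrixP => i j; rewrite !ord1 !mxE.
- by apply: mx11_eq0; have := h0.1 u; rewrite bformE.
- by rewrite mul_scalar_mx -scalemxAl hu.
split => // p; first by rewrite bf1.
by rewrite trmx1 mulmx1 -scalemx1 bfMZ bf1.
Qed.

Section ComplexEigenvalue.
Variables (x y : 'rV[R]_n) (a b : R).
Hypotheses (bn0 : b != 0) (xy0 : (x != 0) || (y != 0))
  (hx : x *m W1 = (a *: x - b *: y) *m W0) (hy : y *m W1 = (b *: x + a *: y) *m W0).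

Lemma row_free_eigenpair : row_free (col_mx x y).
Proof.
apply: inj_row_free => w; rewrite -(hsubmxK w) mul_row_col.
rewrite [lsubmx w]mx11_scalar [rsubmx w]mx11_scalar !mul_scalar_mx.
set al := lsubmx w 0 0; set be := rsubmx w 0 0 => h.
have hz : (be *: x - al *: y) *m W0 = 0.
  have := congr1 (fun z => z *m W1) h; rewrite /= mul0mx mulmxDl -!scalemxAl hx hy.
  rewrite !scalemxAl -mulmxDl.
  have -> : al *: (a *: x - b *: y) + be *: (b *: x + a *: y) =
     a *: (al *: x + be *: y) + b *: (be *: x - al *: y).
    by apply/matrixP => i j; rewrite !mxE; ring.
  rewrite h scaler0 add0r -scalemxAl => /eqP; rewrite scaler_eq0 (negbTE bn0) /=.
  by move/eqP.
have z := symplectic_mulmx_eq0 h0 hz.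
have ex : (al ^+ 2 + be ^+ 2) *: x = 0.
  have -> : (al ^+ 2 + be ^+ 2) *: x = al *: (al *: x + be *: y) + be *: (be *: x - al *: y).
    by apply/matrixP => i j; rewrite !mxE; ring.
  by rewrite h z !scaler0 addr0.
have ey : (al ^+ 2 + be ^+ 2) *: y = 0.
  have -> : (al ^+ 2 + be ^+ 2) *: y = be *: (al *: x + be *: y) - al *: (be *: x - al *: y).
    by apply/matrixP => i j; rewrite !mxE; ring.
  by rewrite h z !scaler0 subr0.
have /eqP : al ^+ 2 + be ^+ 2 = 0.
  apply/eqP/negPn/negP => sn.
  move: ex ey => /eqP; rewrite scaler_eq0 (negbTE sn) /= => /eqP ex /eqP.
  rewrite scaler_eq0 (negbTE sn) /= => /eqP ey.
  by move: xy0; rewrite ex ey eqxx.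
rewrite paddr_eq0 ?sqr_ge0 // !sqrf_eq0 => /andP[/eqP-> /eqP->].
by rewrite raddf0 row_mx0.
Qed.

(* N is the rotation-scaling [[a, -b], [b, a]]; the skew part of K is chosen so that
   the symmetric part of N K^T is the identity. *)
Lemma tame_block_complex : tame_block W0 W1.
Proof.
set e := (1 - a) / b.
have bxx : bf W0 x x = 0 := h0.1 x.
have byx : bf W0 y x = 0.
  have := h1.1 x; rewrite bformE /bf hx -/(bf W0 _ x) bfDl bfNl !bfZl bxx mulr0 add0r.
  by move/eqP; rewrite oppr_eq0 mulf_eq0 (negbTE bn0) /= => /eqP.
have bxy : bf W0 x y = 0 by rewrite alt_bfC ?byx ?oppr0 //; apply: h0.1.
have byy : bf W0 y y = 0 := h0.1 y.
exists (1 + 1)%N, (col_mx x y), (block_mx a%:M (- b)%:M b%:M a%:M),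
  (block_mx 1%:M (- e)%:M e%:M 1%:M), 1; split => //.
- exact: row_free_eigenpair.
- have gram0 u v : bf W0 u v = 0 -> u *m W0 *m v^T = 0 by move=> ?; apply: mx11_eq0.
  by rewrite tr_col_mx mul_col_mx mul_col_row !gram0 // block_mx0.
- by rewrite !mul_col_mx !mul_row_col hx hy !mul_scalar_mx scaleNr.
split => // p.
- by rewrite bf_scalar_block sqnorm2 /=; ring.
rewrite (_ : bf _ p p = bf (block_mx a%:M (- b)%:M b%:M a%:M) p
    (p *m block_mx 1%:M (- e)%:M e%:M 1%:M)); last by rewrite /bf trmx_mul !mulmxA.
rewrite mul_scalar_block bf_scalar_block sqnorm2 row_mxEl row_mxEr !mxE /= !mulr1n.
by rewrite /e; field; rewrite ?bn0.
Qed.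

End ComplexEigenvalue.

Lemma ReM (z w : R[i]) :
  complex.Re (z * w) = complex.Re z * complex.Re w - complex.Im z * complex.Im w.
Proof. by case: z => ? ?; case: w. Qed.

Lemma ImM (z w : R[i]) :
  complex.Im (z * w) = complex.Re z * complex.Im w + complex.Im z * complex.Re w.
Proof. by case: z => ? ?; case: w. Qed.

(* Take an eigenvector of W1 W0^-1 over C; its real and imaginary parts span the block. *)
Lemma tame_block_exists : (0 < n)%N ->
  (forall tau, 0 <= tau -> symplectic (W0 + tau *: W1)) -> tame_block W0 W1.
Proof.
move=> n0 h2; set A := W1 *m invmx W0.
have AW0 : A *m W0 = W1 by rewrite /A mulmxKV // symplectic_unitmx.
set AC := map_mx (real_complex R) A.
have [lam] : exists lam, root (char_poly AC) lam.
  by apply/closed_rootP; rewrite size_char_poly; case: (n) n0.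
rewrite -eigenvalue_root_char => /eigenvalueP [v hv vn0].
have [Im0|Imn0] := eqVneq (complex.Im lam) 0.
  have : eigenvalue A (complex.Re lam).
    rewrite eigenvalue_root_char -(fmorph_root (real_complex R)) map_char_poly -/AC.
    rewrite [X in root _ X](_ : _ = lam); last by case: lam Im0 {hv} => ? ? /= ->.
    by rewrite -eigenvalue_root_char; apply/eigenvalueP; exists v.
  case/eigenvalueP => u hu un0.
  by apply: (tame_block_real h2 un0); rewrite -AW0 mulmxA hu scalemxAl.
set x := map_mx (@complex.Re R) v; set y := map_mx (@complex.Im R) v.
have xA j : (x *m A) 0 j = complex.Re lam * x 0 j - complex.Im lam * y 0 j.
  have := congr1 (fun M : 'rV[R[i]]_n => complex.Re (M 0 j)) hv.
  rewrite /= !mxE raddf_sum /= ReM => <-; apply: eq_bigr => i _.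
  by rewrite !mxE ReM /= mulr0 subr0.
have yA j : (y *m A) 0 j = complex.Im lam * x 0 j + complex.Re lam * y 0 j.
  have := congr1 (fun M : 'rV[R[i]]_n => complex.Im (M 0 j)) hv.
  rewrite /= !mxE raddf_sum /= ImM addrC => <-; apply: eq_bigr => i _.
  by rewrite !mxE ImM /= mulr0 add0r.
apply: (tame_block_complex (x := x) (y := y) (a := complex.Re lam) Imn0).
- apply/negPn/negP; rewrite negb_or !negbK => /andP[/eqP x0 /eqP y0].
  move: vn0; apply/negP/negPn/eqP/matrixP => i j; rewrite !mxE.
  have := congr1 (fun M : 'rV[R]_n => M i j) x0.
  have := congr1 (fun M : 'rV[R]_n => M i j) y0.
  by rewrite !mxE; case: (v i j) => ? ? /= -> ->.
- rewrite -AW0 mulmxA; congr (_ *m W0); apply/matrixP => i j.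
  by rewrite !ord1 xA !mxE.
- rewrite -AW0 mulmxA; congr (_ *m W0); apply/matrixP => i j.
  by rewrite !ord1 yA !mxE.
Qed.

End InvariantBlock.

Section Extension.
Variable R : realType.

Lemma row_free_split_basis_scale n k m (P P' : 'M[R]_(k, n)) (U : 'M[R]_(m, n)) C :
  row_free (col_mx P (col_mx U P')) -> C \in unitmx ->
  row_free (col_mx P (col_mx U (C *m P'))).
Proof.
move=> freeB uC; apply: inj_row_free => w.
rewrite -(hsubmxK w) -(hsubmxK (rsubmx w)) !mul_row_col mulmxA => h.
set p := lsubmx w; set y := lsubmx (rsubmx w); set s := rsubmx (rsubmx w).
have /eqP : row_mx p (row_mx y (s *m C)) *m col_mx P (col_mx U P') = 0.
  by rewrite !mul_row_col.
rewrite mulmx_free_eq0 // => /eqP ysC0.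
have : row_mx p (row_mx y (s *m C)) = row_mx 0 (row_mx 0 0) by rewrite ysC0 !row_mx0.
case/eq_row_mx => -> /eq_row_mx[-> sC0].
by rewrite -[s](mulmxK uC) sC0 !mul0mx !row_mx0.
Qed.

Variables (n k m : nat) (W0 W1 : 'M[R]_n) (P P' : 'M[R]_(k, n)) (U : 'M[R]_(m, n)).
Variables (N K : 'M[R]_k) (b : R).
Hypotheses (skW0 : W0^T = - W0) (skW1 : W1^T = - W1).
Hypotheses (W0PP : P *m W0 *m P^T = 0) (W0PU : P *m W0 *m U^T = 0)
  (W0PP' : P *m W0 *m P'^T = 1%:M) (W0UP' : U *m W0 *m P'^T = 0)
  (W0P'P' : P' *m W0 *m P'^T = 0).
Hypotheses (W1PP : P *m W1 *m P^T = 0) (W1PU : P *m W1 *m U^T = 0)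
  (W1PP' : P *m W1 *m P'^T = N).
Hypotheses (freeB : row_free (col_mx P (col_mx U P'))) (dimB : (k + (m + k))%N = n).
Hypotheses (b0 : 0 < b) (hK : forall p, bf K p p = sqnorm p)
  (hN : forall p, bf (N *m K^T) p p = b * sqnorm p).

(* J rotates the symplectic pairs (P, c K P') and acts by J' on U; for small c > 0 the
   cross terms of W1 between U and P' are dominated. *)
Lemma tamed_extension (J' : 'M[R]_m) :
  complex_structure J' -> tamed (U *m W0 *m U^T) J' -> tamed (U *m W1 *m U^T) J' ->
  exists J, [/\ complex_structure J, tamed W0 J & tamed W1 J].
Proof.
move=> cJ' t0 t1.
set D := U *m W1 *m P'^T *m K^T; set H := K *m (P' *m W1 *m P'^T) *m K^T.
have [c c0 hc] := posdef_small_perturbation D (- (J' *m D)) H b0 (tamed_posdef t1).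
have uK : K \in unitmx by apply: posdef_unitmx => p; rewrite hK; apply: sqnorm_gt0.
have ucK : c *: K \in unitmx by rewrite unitmxZ ?unitfE ?gt_eqF.
set Q := (c *: K) *m P'.
have [J cJ hJ] := split_basis_complex_structure
  (row_free_split_basis_scale freeB ucK) dimB cJ'.
have gramQ l (X : 'M_(l, n)) W : X *m W *m Q^T = c *: (X *m W *m P'^T *m K^T).
  by rewrite /Q trmx_mul linearZ /= !mulmxA scalemxAr.
have gramQl l (Y : 'M_(l, n)) W : Q *m W *m Y^T = c *: (K *m (P' *m W *m Y^T)).
  by rewrite /Q -!scalemxAl !mulmxA.
have coords (v : 'rV_n) : v != 0 -> exists (p : 'rV_k) (y : 'rV_m) (s : 'rV_k),
    [/\ [|| p != 0, y != 0 | s != 0], v = p *m P + (y *m U + s *m Q)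
       & v *m J = (- s) *m P + (y *m J' *m U + p *m Q)].
  move=> vn0; have [p [y [s [ev eJv]]]] := hJ v; exists p, y, s; split => //.
  by move: vn0; rewrite ev; apply: split_coord_neq0.
exists J; split => // v /coords[p [y [s [nz -> ->]]]].
- rewrite bform_split_cplx // !gramQ gramQl W0PP' W0UP' W0P'P'.
  rewrite mul1mx mulmx0 ?mul0mx ?scaler0 ?mul0mx ?scaler0 !bf0M !bfMZ -!bf_tr !hK.
  have := tamed_ge0 y t0; have := mulr_ge0 (ltW c0) (sqnorm_ge0 p).
  have := mulr_ge0 (ltW c0) (sqnorm_ge0 s).
  case/or3P: nz => [/sqnorm_gt0 | /t0 | /sqnorm_gt0] pos.
  + have := mulr_gt0 c0 pos; lra.
  + lra.
  + have := mulr_gt0 c0 pos; lra.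
have := hc y p s nz; rewrite -bform_tamed bfMN -bf_mull.
rewrite bform_split_cplx // !gramQ gramQl W1PP'.
rewrite -scalemxAl -/H -/D !bfMZ !hN => pos; apply: (lt_le_trans pos).
by rewrite le_eqVlt; apply/orP; left; apply/eqP; ring.
Qed.

End Extension.

Section Main.
Variable R : realType.

Lemma posdef_mulmx_unitmx k (A B : 'M[R]_k) : posdef (A *m B) -> A \in unitmx.
Proof. by move/posdef_unitmx; rewrite unitmx_mul => /andP[]. Qed.

Lemma tamed_complex_structure_exists n (W0 W1 : 'M[R]_n) :
  symplectic W0 -> symplectic W1 ->
  (forall tau, 0 <= tau -> symplectic (W0 + tau *: W1)) ->
  exists J, [/\ complex_structure J, tamed W0 J & tamed W1 J].
Proof.
elim/ltn_ind: n W0 W1 => -[|n] IH W0 W1 h0 h1 h2.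
  exists 0; split.
  - by rewrite /complex_structure [LHS]flatmx0 [RHS]flatmx0.
  - by move=> v; rewrite thinmx0 eqxx.
  - by move=> v; rewrite thinmx0 eqxx.
have [k [P [N [K [b [k0 freeP W0PP PW1 [b0 hK hN]]]]]]] :=
  tame_block_exists h0 h1 (ltn0Sn n) h2.
have [P' [W0PP' W0P'P']] := isotropic_dual h0 freeP W0PP.
have [m [U [dimB W0PU W0UP' freeB]]] := symplectic_complement h0 W0PP W0PP' W0P'P'.
have W1P l (X : 'M_(l, n.+1)) : P *m W1 *m X^T = N *m (P *m W0 *m X^T).
  by rewrite PW1 !mulmxA.
have W1PP : P *m W1 *m P^T = 0 by rewrite W1P W0PP mulmx0.
have W1PU : P *m W1 *m U^T = 0 by rewrite W1P W0PU mulmx0.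
have W1PP' : P *m W1 *m P'^T = N by rewrite W1P W0PP' mulmx1.
have uN : N \in unitmx.
  have NK : posdef (N *m K^T) by move=> p /sqnorm_gt0 pos; rewrite hN mulr_gt0.
  exact: posdef_mulmx_unitmx NK.
have u1N tau : 0 <= tau -> (1%:M + tau *: N) \in unitmx.
  move=> tau0; have : posdef ((1%:M + tau *: N) *m K^T); last exact: posdef_mulmx_unitmx.
  move=> p /sqnorm_gt0 pos.
  rewrite mulmxDl mul1mx -scalemxAl bfMD bfMZ hN -bf_tr hK.
  by rewrite ltr_wpDr // !mulr_ge0 // ltW.
have s0 : symplectic (U *m W0 *m U^T).
  exact (symplectic_reduction freeB dimB h0 W0PP W0PU W0PP' (unitmx1 _ _)).
have s1 : symplectic (U *m W1 *m U^T).
  exact (symplectic_reduction freeB dimB h1 W1PP W1PU W1PP' uN).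
have s2 tau : 0 <= tau -> symplectic (U *m W0 *m U^T + tau *: (U *m W1 *m U^T)).
  move=> tau0; rewrite scalemxAl scalemxAr -mulmxDl -mulmxDr.
  apply: (symplectic_reduction freeB dimB (h2 _ tau0) (M := 1%:M + tau *: N)).
  - by rewrite mulmxDr mulmxDl -scalemxAr -scalemxAl W0PP W1PP scaler0 addr0.
  - by rewrite mulmxDr mulmxDl -scalemxAr -scalemxAl W0PU W1PU scaler0 addr0.
  - by rewrite mulmxDr mulmxDl -scalemxAr -scalemxAl W0PP' W1PP'.
  - exact: u1N.
have mn : (m < n.+1)%N by rewrite -dimB; lia.
have [J' [cJ' t0 t1]] := IH m mn _ _ s0 s1 s2.
exact: (tamed_extension (alt_trmx h0.1) (alt_trmx h1.1) W0PP W0PU W0PP' W0UP' W0P'P'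
  W1PP W1PU W1PP' freeB dimB b0 hK hN cJ' t0 t1).
Qed.

Lemma bformMD n (W V : 'M[R]_n) u v : bform (W + V) u v = bform W u v + bform V u v.
Proof. by rewrite !bformE bfMD. Qed.

Lemma bformMZ n (W : 'M[R]_n) a u v : bform (a *: W) u v = a * bform W u v.
Proof. by rewrite !bformE bfMZ. Qed.

Lemma symplecticZ n (W : 'M[R]_n) a : a != 0 -> symplectic (a *: W) -> symplectic W.
Proof.
move=> an0 [alt nd]; split=> [v|u hu].
  by have /eqP := alt v; rewrite bformMZ mulf_eq0 (negbTE an0) => /eqP.
by apply: nd => v; rewrite bformMZ hu mulr0.
Qed.

Lemma tamed_symplectic n (W J : 'M[R]_n) :
  (forall v, bform W v v = 0) -> tamed W J -> symplectic W.
Proof. by move=> alt tWJ; split => // u hu; apply/eqP/negPn/negP => /tWJ; rewrite hu ltxx. Qed.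

Lemma symplectic_ray n (W0 W1 : 'M[R]_n) :
  (forall t, 0 <= t <= 1 -> symplectic ((1 - t) *: W0 + t *: W1)) ->
  forall tau, 0 <= tau -> symplectic (W0 + tau *: W1).
Proof.
move=> h tau tau0; have t1 : 0 < 1 + tau by rewrite ltr_pwDl.
apply: (@symplecticZ _ _ (1 + tau)^-1); first by rewrite invr_eq0 gt_eqF.
have -> : (1 + tau)^-1 *: (W0 + tau *: W1) =
    (1 - tau / (1 + tau)) *: W0 + (tau / (1 + tau)) *: W1.
  rewrite scalerDr scalerA mulrC; congr (_ *: _ + _ *: _).
  by field; rewrite gt_eqF.
apply: h; apply/andP; split; first by rewrite divr_ge0 // ltW.
by rewrite ler_pdivrMr // mul1r; lra.
Qed.

Lemma tamed_combination n (W0 W1 J : 'M[R]_n) t : 0 <= t <= 1 ->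
  tamed W0 J -> tamed W1 J -> tamed ((1 - t) *: W0 + t *: W1) J.
Proof.
move=> /andP[t0 t1] tW0 tW1 v vn0; rewrite bformMD !bformMZ.
have := tW0 v vn0; have := tW1 v vn0; nra.
Qed.

End Main.

Unset Implicit Arguments.

Theorem proposition1p2 (R : realType) (n : nat) (W0 W1 : 'M[R]_n) :
  symplectic W0 -> symplectic W1 ->
  [<-> (forall t : R, 0 <= t <= 1 -> symplectic ((1 - t) *: W0 + t *: W1));
       (forall tau : R, 0 <= tau -> symplectic (W0 + tau *: W1));
       (exists J : 'M[R]_n, [/\ complex_structure J, tamed W0 J & tamed W1 J])].
Proof.
move=> h0 h1; tfae.
- exact: symplectic_ray.
- exact: tamed_complex_structure_exists.
case=> J [_ tW0 tW1] t t01; apply: (tamed_symplectic (J := J)).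
  by move=> v; rewrite bformMD !bformMZ h0.1 h1.1 !mulr0 addr0.
exact: tamed_combination.
Qed.
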